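(* Let $\alpha,\beta\in\mathbb{R}$ and consider the Sharma-Mittal entropy $S_{\alpha,\beta}$ on $\mathcal{P}_n$. Then $S_{\alpha,\beta}$ is Schur-concave if $\alpha\ge 0$, and Schur-convex if $\alpha<0$ (in the latter case on the set of probability vectors with all entries strictly positive).
   Context: Let $\mathcal{P}_n=\{\mathbf{p}=(p_1,\dots,p_n): p_i\ge 0,\ \sum_i p_i=1\}$. For $\mathbf{p},\mathbf{q}\in\mathcal{P}_n$ with components sorted in non-increasing order, $\mathbf{p}\preceq\mathbf{q}$ ($\mathbf{p}$ is majorized by $\mathbf{q}$) means $\sum_{i=1}^k p_i\le\sum_{i=1}^k q_i$ for $k=1,\dots,n$ (applied to the non-increasing rearrangements). A function $\phi$ is Schur-convex if $\mathbf{p}\preceq\mathbf{q}$ implies $\phi(\mathbf{p})\le\phi(\mathbf{q})$, and Schur-concave if $-\phi$ is Schur-convex. The Sharma-Mittal entropy is $S_{\alpha,\beta}(\mathbf{p})=\frac{1}{1-\beta}\left[\left(\sum_{i=1}^n p_i^\alpha\right)^{\frac{1-\beta}{1-\alpha}}-1\right]$, with the values at $\alpha=1$ and/or $\beta=1$ defined by the corresponding limits. When $\alpha<0$ it is assumed that all $p_i>0$, so that the entropy is well-defined. *)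

From HB Require Import structures.
From mathcomp Require Import all_boot all_order all_algebra.
From mathcomp Require Import all_classical all_reals all_analysis.
Set Implicit Arguments. Unset Strict Implicit. Unset Printing Implicit Defensive.
Import Order.TTheory GRing.Theory Num.Theory.
Local Open Scope ring_scope.

Definition prob_vec (R : realType) (n : nat) (p : 'I_n -> R) : Prop :=
  (forall i, 0 <= p i) /\ \sum_(i < n) p i = 1.

Definition pos_vec (R : realType) (n : nat) (p : 'I_n -> R) : Prop :=
  forall i, 0 < p i.

Definition decr (R : realType) (n : nat) (p : 'I_n -> R) : seq R :=
  sort (fun x y : R => y <= x) [seq p i | i <- enum 'I_n].

Definition majorized (R : realType) (n : nat) (p q : 'I_n -> R) : Prop :=
  forall k : nat, (k <= n)%N ->
    \sum_(0 <= i < k) nth 0 (decr p) i <= \sum_(0 <= i < k) nth 0 (decr q) i.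

Definition schur_convex_on (R : realType) (n : nat)
    (D : ('I_n -> R) -> Prop) (phi : ('I_n -> R) -> R) : Prop :=
  forall p q, D p -> D q -> majorized p q -> phi p <= phi q.

Definition schur_concave_on (R : realType) (n : nat)
    (D : ('I_n -> R) -> Prop) (phi : ('I_n -> R) -> R) : Prop :=
  schur_convex_on D (fun p => - phi p).

(* Shannon entropy (natural log; ln 0 = 0 in the library, so 0 ln 0 = 0). *)
Definition shannon (R : realType) (n : nat) (p : 'I_n -> R) : R :=
  - \sum_(i < n) p i * ln (p i).

(* Sharma-Mittal entropy, with the values at alpha = 1 and/or beta = 1
   given by the corresponding limits (written out explicitly). *)
Definition sharma_mittal (R : realType) (n : nat) (alpha beta : R)
    (p : 'I_n -> R) : R :=
  let s := \sum_(i < n) powR (p i) alpha in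
  if alpha == 1 then
    if beta == 1 then shannon p
    else (1 - beta)^-1 * (expR ((1 - beta) * shannon p) - 1)
  else
    if beta == 1 then (1 - alpha)^-1 * ln s
    else (1 - beta)^-1 * (powR s ((1 - beta) / (1 - alpha)) - 1).

From HB Require Import structures.
From mathcomp Require Import all_boot all_order all_algebra.
From mathcomp Require Import all_classical all_reals all_analysis.
From mathcomp Require Import ring lra.
Set Implicit Arguments. Unset Strict Implicit. Unset Printing Implicit Defensive.
Import Order.TTheory GRing.Theory Num.Theory.
Local Open Scope ring_scope.

(* The Sharma-Mittal entropy is a nondecreasing function of the Renyi entropy
   (1 - a)^-1 ln (sum_i p_i^a), with the Shannon entropy at a = 1.  Hence it
   suffices that the power sum sum_i p_i^a is Schur-convex for a >= 1 and for
   a < 0 (on positive vectors), Schur-concave for 0 <= a <= 1, and that the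
   Shannon entropy is Schur-concave.  These are instances of Karamata's
   inequality, proved by Abel summation against the tangent slopes of x^a and
   x ln x taken at the entries of the smaller (majorized) vector. *)

Section AbelSummation.
Variable R : realDomainType.
Variables (x y c : nat -> R) (N : nat).
Hypothesis prefix_le :
  forall k, (k <= N)%N -> \sum_(0 <= i < k) x i <= \sum_(0 <= i < k) y i.
Hypothesis c_anti : forall i, (i.+1 < N)%N -> c i.+1 <= c i.

Lemma abel_prefix_le m : (m <= N)%N ->
  c m.-1 * (\sum_(0 <= i < m) y i - \sum_(0 <= i < m) x i)
    <= \sum_(0 <= i < m) c i * (y i - x i).
Proof.
elim: m => [|m IHm] ltmN; first by rewrite !big_geq // subrr mulr0.
rewrite !big_nat_recr //=.
have IH := IHm (ltnW ltmN).
have prefix_m := prefix_le (ltnW ltmN).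
have c_m : c m <= c m.-1.
  by case: m {IHm IH prefix_m} ltmN => //= m; apply: c_anti.
set X := \sum_(0 <= i < m) x i in IH prefix_m *.
set Y := \sum_(0 <= i < m) y i in IH prefix_m *.
set S := \sum_(0 <= i < m) c i * (y i - x i) in IH *.
nra.
Qed.

Lemma abel_sum_ge0 : \sum_(0 <= i < N) x i = \sum_(0 <= i < N) y i ->
  0 <= \sum_(0 <= i < N) c i * (y i - x i).
Proof.
by move=> total_eq; have := abel_prefix_le (leqnn N); rewrite total_eq subrr mulr0.
Qed.

End AbelSummation.

Section KaramataSeq.
Variable R : realDomainType.
Variables (x y : nat -> R) (N : nat).
Hypothesis x_anti : forall i j, (i <= j < N)%N -> x j <= x i.
Hypothesis x_ge0 : forall i, (i < N)%N -> 0 <= x i.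
Hypothesis y_ge0 : forall i, (i < N)%N -> 0 <= y i.
Hypothesis prefix_le :
  forall k, (k <= N)%N -> \sum_(0 <= i < k) x i <= \sum_(0 <= i < k) y i.
Hypothesis total_eq : \sum_(0 <= i < N) x i = \sum_(0 <= i < N) y i.

Lemma majorized_seq_eq0 i : (i < N)%N -> x i = 0 -> y i = 0.
Proof.
move=> ltiN xi0.
have x_prefix : \sum_(0 <= j < i) x j = \sum_(0 <= j < N) x j.
  rewrite (big_cat_nat (leq0n i) (ltnW ltiN)) /= [X in _ + X]big_nat_cond.
  rewrite [X in _ + X]big1 ?addr0 // => j /andP[/andP[leij ltjN] _].
  by apply: le_anti; rewrite x_ge0 // andbT -xi0 x_anti // leij.
have y_prefix : \sum_(0 <= j < i.+1) y j <= \sum_(0 <= j < N) y j.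
  rewrite (big_cat_nat (leq0n i.+1) ltiN) /= lerDl big_nat_cond.
  by apply: sumr_ge0 => j /andP[/andP[_ ltjN] _]; apply: y_ge0.
have := prefix_le (ltnW ltiN); rewrite x_prefix total_eq.
rewrite big_nat_recr //= in y_prefix.
by move=> prefix_i; apply: le_anti; rewrite y_ge0 // andbT; lra.
Qed.

Variables (phi g : R -> R) (Q : R -> Prop).
Hypothesis tangent_le : forall a b, 0 < a -> Q b -> g a * (b - a) <= phi b - phi a.
Hypothesis g_homo : forall a b, 0 < a -> a <= b -> g a <= g b.

Lemma karamata_seq : (forall i, (i < N)%N -> Q (y i)) ->
  \sum_(0 <= i < N) phi (x i) <= \sum_(0 <= i < N) phi (y i).
Proof.
move=> yQ.
(* Where x vanishes the slope g may be meaningless (think of ln 0), but there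
   y vanishes too, so any common lower bound -M of the slopes will do. *)
pose M := \sum_(0 <= j < N) `|g (x j)|.
have g_ge i : (i < N)%N -> - M <= g (x i).
  move=> ltiN; apply: lerNnormlW.
  rewrite /M (bigD1_seq i) ?mem_index_iota ?iota_uniq //= lerDl.
  exact: sumr_ge0.
pose c i := if 0 < x i then g (x i) else - M.
have c_anti i : (i.+1 < N)%N -> c i.+1 <= c i.
  move=> ltiN; rewrite /c; case: ifP => [xi1_gt0|_].
    have xi1_le : x i.+1 <= x i by apply: x_anti; rewrite leqnSn.
    by rewrite (lt_le_trans xi1_gt0 xi1_le); apply: g_homo.
  by case: ifP => // _; apply/g_ge/ltnW.
have c_tangent i : (i < N)%N -> c i * (y i - x i) <= phi (y i) - phi (x i).
  move=> ltiN; rewrite /c; case: ifPn => [xi_gt0|].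
    exact: tangent_le (yQ _ ltiN).
  rewrite -leNgt => xi_le0.
  have xi0 : x i = 0 by apply: le_anti; rewrite xi_le0 x_ge0.
  by rewrite (majorized_seq_eq0 ltiN xi0) xi0 !subrr mulr0.
rewrite -subr_ge0 -sumrB.
apply: le_trans (abel_sum_ge0 prefix_le c_anti total_eq) _.
exact: ler_sum_nat.
Qed.

End KaramataSeq.

Section Karamata.
Variables (R : realType) (n : nat).

Lemma size_decr (p : 'I_n -> R) : size (decr p) = n.
Proof. by rewrite size_sort size_map size_enum_ord. Qed.

Lemma big_decr (p : 'I_n -> R) (f : R -> R) :
  \sum_(i < n) f (p i) = \sum_(0 <= i < n) f (nth 0 (decr p) i).
Proof.
have -> : \sum_(0 <= i < n) f (nth 0 (decr p) i) = \sum_(v <- decr p) f v.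
  by rewrite [RHS](big_nth 0) size_decr.
rewrite (perm_big _ (permEl (perm_sort _ _))) big_map big_enum /=.
by apply: eq_bigl => i; rewrite inE.
Qed.

Lemma nth_decr_image (p : 'I_n -> R) i : (i < n)%N ->
  exists j, nth 0 (decr p) i = p j.
Proof.
move=> ltin; have : nth 0 (decr p) i \in decr p by rewrite mem_nth ?size_decr.
by rewrite mem_sort => /mapP[j _ ->]; exists j.
Qed.

Lemma nth_decr_anti (p : 'I_n -> R) i j : (i <= j < n)%N ->
  nth 0 (decr p) j <= nth 0 (decr p) i.
Proof.
case/andP => leij ltjn.
have ge_trans : transitive (fun a b : R => b <= a).
  by move=> a b c ba cb; exact: le_trans cb ba.
have decr_sorted : sorted (fun a b : R => b <= a) (decr p).
  by apply: sort_sorted => a b; exact: le_total.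
apply: (sorted_leq_nth ge_trans lexx 0 decr_sorted) => //.
by rewrite inE size_decr (leq_ltn_trans leij).
by rewrite inE size_decr.
Qed.

Lemma karamata (phi g : R -> R) (Q : R -> Prop) (p q : 'I_n -> R) :
  (forall a b, 0 < a -> Q b -> g a * (b - a) <= phi b - phi a) ->
  (forall a b, 0 < a -> a <= b -> g a <= g b) ->
  (forall i, 0 <= p i) -> (forall i, 0 <= q i) -> (forall i, Q (q i)) ->
  \sum_i p i = \sum_i q i -> majorized p q ->
  \sum_i phi (p i) <= \sum_i phi (q i).
Proof.
move=> tangent_le g_homo p_ge0 q_ge0 qQ total_eq pq.
have dp_ge0 i : (i < n)%N -> 0 <= nth 0 (decr p) i.
  by move=> /(nth_decr_image p)[j ->].
have dq_ge0 i : (i < n)%N -> 0 <= nth 0 (decr q) i.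
  by move=> /(nth_decr_image q)[j ->].
have dqQ i : (i < n)%N -> Q (nth 0 (decr q) i).
  by move=> /(nth_decr_image q)[j ->].
rewrite !big_decr.
apply: (karamata_seq _ dp_ge0 dq_ge0 pq _ tangent_le g_homo dqQ).
- by move=> i j; apply: nth_decr_anti.
- by rewrite -!(big_decr _ id).
Qed.

End Karamata.

Section TangentInequalities.
Variable R : realType.

Lemma powR_le_bernoulli (b u : R) : 0 <= b <= 1 -> 0 <= u ->
  powR u b <= b * u + (1 - b).
Proof.
case/andP => b_ge0 b_le1 u_ge0.
have [->|b_neq0] := eqVneq b 0; first by rewrite powRr0 mul0r subr0 add0r.
have [->|b_neq1] := eqVneq b 1; first by rewrite powRr1 // mul1r subrr addr0.
have b_gt0 : 0 < b by rewrite lt_def b_neq0.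
have b_lt1 : b < 1 by rewrite lt_def eq_sym b_neq1.
have ib_gt0 : 0 < b^-1 by rewrite invr_gt0.
have i1b_gt0 : 0 < (1 - b)^-1 by rewrite invr_gt0 subr_gt0.
have := conjugate_powR (powR_ge0 u b) ler01 ib_gt0 i1b_gt0.
rewrite !invrK mulr1 addrC subrK => /(_ erefl).
by rewrite -powRrM mulfV ?gt_eqF // powRr1 // powR1 mul1r [u * b]mulrC.
Qed.

Lemma ge1_bernoulli_le_powR (a t : R) : 1 <= a -> 0 <= t ->
  1 + a * (t - 1) <= powR t a.
Proof.
move=> a_ge1 t_ge0.
have a_gt0 : 0 < a by apply: lt_le_trans a_ge1.
have ia01 : 0 <= a^-1 <= 1 by rewrite invr_ge0 ltW //= invf_le1.
have := powR_le_bernoulli ia01 (powR_ge0 t a).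
rewrite -powRrM mulfV ?gt_eqF // powRr1 // => /(ler_wpM2l (ltW a_gt0)).
rewrite mulrDr mulrA mulrBr mulfV ?gt_eqF // mul1r mulr1.
lra.
Qed.

Lemma lt0_bernoulli_le_powR (a t : R) : a < 0 -> 0 < t ->
  1 + a * (t - 1) <= powR t a.
Proof.
move=> a_lt0 t_gt0; rewrite /powR gt_eqF //.
have := expR_ge1Dx (a * ln t).
have : ln t <= t - 1 by have := @le_ln1Dx R (t - 1); rewrite subrKC; apply; lra.
nra.
Qed.

Lemma le0_ger_powR (r a b : R) : r <= 0 -> 0 < a -> a <= b ->
  powR b r <= powR a r.
Proof.
move=> r_le0 a_gt0 le_ab; have b_gt0 := lt_le_trans a_gt0 le_ab.
have -> : r = - (- r) by rewrite opprK.
rewrite (powRN b) (powRN a) lef_pV2 ?posrE ?powR_gt0 //.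
by apply: ge0_ler_powR; rewrite // ?oppr_ge0 // nnegrE ltW.
Qed.

Lemma powR_tangent_rescale (a b c : R) : 0 < a -> 0 <= b ->
  powR b c = powR a c * powR (b / a) c /\
  c * powR a (c - 1) * (b - a) = powR a c * (c * (b / a - 1)).
Proof.
move=> a_gt0 b_ge0; split.
  by rewrite -powRM ?divr_ge0 ?(ltW a_gt0) // mulrC divfK ?gt_eqF.
rewrite powRB; last by rewrite (gt_eqF a_gt0) implybT.
by rewrite powRr1 ?(ltW a_gt0) //; field; rewrite gt_eqF.
Qed.

Lemma powR_tangent_le (a b c : R) :
  1 <= c \/ (c < 0 /\ 0 < b) -> 0 < a -> 0 <= b ->
  c * powR a (c - 1) * (b - a) <= powR b c - powR a c.
Proof.
move=> c_cases a_gt0 b_ge0; have [-> ->] := powR_tangent_rescale c a_gt0 b_ge0.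
have ac_gt0 : 0 < powR a c by apply: powR_gt0.
have : 1 + c * (b / a - 1) <= powR (b / a) c.
  case: c_cases => [c_ge1|[c_lt0 b_gt0]].
    by apply: ge1_bernoulli_le_powR; rewrite ?divr_ge0 ?(ltW a_gt0).
  by apply: lt0_bernoulli_le_powR; rewrite ?divr_gt0.
nra.
Qed.

Lemma powR_tangent_ge (a b c : R) : 0 <= c <= 1 -> 0 < a -> 0 <= b ->
  powR b c - powR a c <= c * powR a (c - 1) * (b - a).
Proof.
move=> c01 a_gt0 b_ge0; have [-> ->] := powR_tangent_rescale c a_gt0 b_ge0.
have ac_gt0 : 0 < powR a c by apply: powR_gt0.
have := powR_le_bernoulli c01 (divr_ge0 b_ge0 (ltW a_gt0)).
nra.
Qed.

Lemma xlnx_tangent_le (a b : R) : 0 < a -> 0 <= b ->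
  (ln a + 1) * (b - a) <= b * ln b - a * ln a.
Proof.
move=> a_gt0; rewrite le_eqVlt => /predU1P[<-|b_gt0]; first by rewrite mul0r; nra.
have : ln (a / b) <= a / b - 1.
  have := @le_ln1Dx R (a / b - 1); rewrite subrKC; apply.
  by have := divr_gt0 a_gt0 b_gt0; lra.
rewrite ln_div ?posrE //.
have : b * (a / b) = a by rewrite mulrC divfK ?gt_eqF.
nra.
Qed.

End TangentInequalities.

Section SchurPowerSums.
Variables (R : realType) (n : nat).
Implicit Types p q : 'I_n -> R.

Lemma majorized_sum_powR_ge1 (a : R) p q : 1 <= a ->
  prob_vec p -> prob_vec q -> majorized p q ->
  \sum_i powR (p i) a <= \sum_i powR (q i) a.
Proof.
move=> a_ge1 [p_ge0 p1] [q_ge0 q1] pq.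
apply: (karamata (phi := fun x => powR x a) (g := fun x => a * powR x (a - 1))
  (Q := fun b => 0 <= b)) => //.
- by move=> x y x_gt0 y_ge0; apply: powR_tangent_le => //; left.
- move=> x y x_gt0 le_xy; rewrite ler_wpM2l ?(le_trans ler01) //.
  by apply: ge0_ler_powR; rewrite ?subr_ge0 // nnegrE ltW // (lt_le_trans x_gt0).
- by rewrite p1 q1.
Qed.

Lemma majorized_sum_powR_lt0 (a : R) p q : a < 0 ->
  prob_vec p -> prob_vec q -> pos_vec q -> majorized p q ->
  \sum_i powR (p i) a <= \sum_i powR (q i) a.
Proof.
move=> a_lt0 [p_ge0 p1] [q_ge0 q1] q_gt0 pq.
apply: (karamata (phi := fun x => powR x a) (g := fun x => a * powR x (a - 1))
  (Q := fun b => 0 < b)) => //.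
- by move=> x y x_gt0 y_gt0; apply: powR_tangent_le => //; [right | exact: ltW].
- move=> x y x_gt0 le_xy; rewrite ler_nM2l //.
  by apply: le0_ger_powR; rewrite // subr_le0 (le_trans (ltW a_lt0)).
- by rewrite p1 q1.
Qed.

Lemma majorized_sum_powR_le1 (a : R) p q : 0 <= a <= 1 ->
  prob_vec p -> prob_vec q -> majorized p q ->
  \sum_i powR (q i) a <= \sum_i powR (p i) a.
Proof.
move=> /[dup] a01 /andP[a_ge0 a_le1] [p_ge0 p1] [q_ge0 q1] pq.
rewrite -lerN2 -!sumrN.
apply: (karamata (phi := fun x => - powR x a) (g := fun x => - (a * powR x (a - 1)))
  (Q := fun b => 0 <= b)) => //.
- move=> x y x_gt0 y_ge0; have := powR_tangent_ge a01 x_gt0 y_ge0; lra.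
- move=> x y x_gt0 le_xy; rewrite lerN2 ler_wpM2l //.
  by apply: le0_ger_powR; rewrite // subr_le0.
- by rewrite p1 q1.
Qed.

Lemma majorized_shannon_ge p q : prob_vec p -> prob_vec q -> majorized p q ->
  shannon q <= shannon p.
Proof.
move=> [p_ge0 p1] [q_ge0 q1] pq; rewrite lerN2.
apply: (karamata (phi := fun x => x * ln x) (g := fun x => ln x + 1)
  (Q := fun b => 0 <= b)) => //.
- by move=> x y x_gt0 y_ge0; apply: xlnx_tangent_le.
- move=> x y x_gt0 le_xy; rewrite lerD2r ler_ln ?posrE //.
  exact: lt_le_trans le_xy.
- by rewrite p1 q1.
Qed.

Lemma sum_powR_gt0 (a : R) p : prob_vec p -> 0 < \sum_i powR (p i) a.
Proof.
move=> [p_ge0 p1].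
have [i pi_gt0] : exists i, 0 < p i.
  apply/not_existsP => all_le0; move: p1; rewrite big1 => [/eqP|i _].
    by rewrite eq_sym oner_eq0.
  by apply: le_anti; rewrite p_ge0 andbT leNgt; apply/negP/all_le0.
rewrite (bigD1 i) //= ltr_pwDl ?powR_gt0 //.
by apply: sumr_ge0 => j _; apply: powR_ge0.
Qed.

End SchurPowerSums.

Lemma schur_convex_on_comp (R : realType) (n : nat)
    (D : ('I_n -> R) -> Prop) (f : R -> R) (phi psi : ('I_n -> R) -> R) :
  {homo f : x y / x <= y} -> (forall p, D p -> psi p = f (phi p)) ->
  schur_convex_on D phi -> schur_convex_on D psi.
Proof.
by move=> f_homo psiE phi_convex p q Dp Dq pq; rewrite !psiE // f_homo // phi_convex.
Qed.

Lemma schur_concave_on_comp (R : realType) (n : nat)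
    (D : ('I_n -> R) -> Prop) (f : R -> R) (phi psi : ('I_n -> R) -> R) :
  {homo f : x y / x <= y} -> (forall p, D p -> psi p = f (phi p)) ->
  schur_concave_on D phi -> schur_concave_on D psi.
Proof.
move=> f_homo psiE phi_concave p q Dp Dq pq /=.
by rewrite !psiE // lerN2 f_homo // -lerN2 phi_concave.
Qed.

Definition renyi (R : realType) (n : nat) (a : R) (p : 'I_n -> R) : R :=
  if a == 1 then shannon p else (1 - a)^-1 * ln (\sum_i powR (p i) a).

Definition sharma_mittal_of_renyi (R : realType) (b h : R) : R :=
  if b == 1 then h else (1 - b)^-1 * (expR ((1 - b) * h) - 1).

Section Renyi.
Variables (R : realType) (n : nat).

Lemma renyi_schur_concave (a : R) : 0 <= a ->
  schur_concave_on (@prob_vec R n) (renyi a).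
Proof.
move=> a_ge0 p q Pp Pq pq /=; rewrite lerN2 /renyi.
have [_|] := eqVneq a 1; first exact: majorized_shannon_ge.
rewrite neq_lt => /orP[a_lt1|a_gt1].
  rewrite ler_pM2l ?invr_gt0 ?subr_gt0 // ler_ln ?posrE ?sum_powR_gt0 //.
  by apply: majorized_sum_powR_le1; rewrite ?a_ge0 ?ltW.
rewrite ler_nM2l ?invr_lt0 ?subr_lt0 // ler_ln ?posrE ?sum_powR_gt0 //.
exact: majorized_sum_powR_ge1 (ltW a_gt1) Pp Pq pq.
Qed.

Lemma renyi_schur_convex (a : R) : a < 0 ->
  schur_convex_on (fun p : 'I_n -> R => prob_vec p /\ pos_vec p) (renyi a).
Proof.
move=> a_lt0 p q [Pp _] [Pq q_gt0] pq; have a_lt1 := lt_trans a_lt0 ltr01.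
rewrite /renyi lt_eqF // ler_pM2l ?invr_gt0 ?subr_gt0 //.
by rewrite ler_ln ?posrE ?sum_powR_gt0 // majorized_sum_powR_lt0.
Qed.

Lemma sharma_mittal_of_renyi_homo (b : R) :
  {homo sharma_mittal_of_renyi b : h k / h <= k}.
Proof.
move=> h k le_hk; rewrite /sharma_mittal_of_renyi; case: eqP => // /eqP b_neq1.
rewrite -subr_ge0 -mulrBr opprB addrA subrK.
have : 1 - b != 0 by rewrite subr_eq0 eq_sym.
rewrite neq_lt => /orP[b_lt|b_gt].
  by rewrite nmulr_rge0 ?invr_lt0 // subr_le0 ler_expR ler_nM2l.
by rewrite pmulr_rge0 ?invr_gt0 // subr_ge0 ler_expR ler_pM2l.
Qed.

Lemma sharma_mittal_renyi (a b : R) (p : 'I_n -> R) : prob_vec p ->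
  sharma_mittal a b p = sharma_mittal_of_renyi b (renyi a p).
Proof.
move=> Pp; rewrite /sharma_mittal /renyi /sharma_mittal_of_renyi /=.
case: eqP => // _; case: eqP => // _.
by rewrite /powR gt_eqF ?sum_powR_gt0 // mulrA.
Qed.

End Renyi.

Theorem lemma1 (R : realType) (n : nat) (alpha beta : R) :
  (0 <= alpha ->
     schur_concave_on (@prob_vec R n) (sharma_mittal alpha beta)) /\
  (alpha < 0 ->
     schur_convex_on (fun p : 'I_n -> R => prob_vec p /\ pos_vec p)
                     (sharma_mittal alpha beta)).
Proof.
split=> [a_ge0|a_lt0].
  apply: schur_concave_on_comp (sharma_mittal_of_renyi_homo beta) _
    (renyi_schur_concave a_ge0).
  exact: sharma_mittal_renyi.
apply: schur_convex_on_comp (sharma_mittal_of_renyi_homo beta) _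
  (renyi_schur_convex a_lt0).
by move=> p [Pp _]; apply: sharma_mittal_renyi.
Qed.
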